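(* For any subset $A\subset E$ and any edge $k\in E$, (i) $D_kB_A^c=\sqrt{pq}\,\mathbf 1\{k\in A\}\,B_{A\setminus\{k\}}$; (ii) $-D_kL^{-1}B_A^c=\sqrt{pq}\,\mathbf 1\{k\in A\}\sum_{\{k\}\subset\alpha\subset A}\dfrac{p^{|A|-|\alpha|}}{|A|\binom{|A|-1}{|\alpha|-1}}B_{\alpha\setminus\{k\}}$. In particular, all these expressions are non-negative.
   Context: $E$ is the (finite) set of all $\binom n2$ possible edges on $n$ vertices, $p\in(0,1)$, $q=1-p$. $(X_k)_{k\in E}$ are independent Rademacher variables with $\mathbb{P}(X_k=1)=p$. $B_k=\frac12(X_k+1)$, $Y_k=(pq)^{-1/2}(B_k-p)$; for $A\subset E$, $B_A=\prod_{k\in A}B_k$, $Y_A=\prod_{k\in A}Y_k$ ($B_\emptyset=Y_\emptyset=1$), and $Z^c:=Z-\mathbb{E}[Z]$. The discrete gradient is $D_kF=\sqrt{pq}(F_k^+-F_k^-)$, where $F_k^\pm$ is $F$ with $X_k$ set to $\pm1$. Every functional $F$ of $(X_k)$ can be written $F=\mathbb{E}F+\sum_{\emptyset\ne\alpha\subset E}c_\alpha Y_\alpha$, and the pseudo-inverse Ornstein–Uhlenbeck operator is $L^{-1}F=-\sum_{\emptyset\neq\alpha\subset E}\frac{c_\alpha}{|\alpha|}Y_\alpha$. *)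

From HB Require Import structures.
From mathcomp Require Import all_boot all_order all_algebra.
From Stdlib Require Import ClassicalEpsilon.
Set Implicit Arguments. Unset Strict Implicit. Unset Printing Implicit Defensive.
Import Order.TTheory GRing.Theory Num.Theory.
Local Open Scope ring_scope.

Definition edge (n : nat) : predArgType := {e : {set 'I_n} | #|e| == 2%N}.
HB.instance Definition _ n := Finite.on (edge n).

Section Defs.
Variables (R : rcfType) (E : finType) (p : R).

Definition q : R := 1 - p.

(* A configuration w : E -> bool; w k = true  <->  X_k = 1. *)
Definition config := {ffun E -> bool}.

Definition functional := config -> R.

Definition Xv (k : E) : functional := fun w => if w k then 1 else -1.
Definition Bv (k : E) : functional := fun w => (Xv k w + 1) / 2.
Definition Yv (k : E) : functional := fun w => (Num.sqrt (p * q))^-1 * (Bv k w - p).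
Definition BA (A : {set E}) : functional := fun w => \prod_(k in A) Bv k w.
Definition YA (A : {set E}) : functional := fun w => \prod_(k in A) Yv k w.

Definition weight (w : config) : R := \prod_(k : E) (if w k then p else q).
Definition Expect (F : functional) : R := \sum_(w : config) weight w * F w.
Definition centered (F : functional) : functional := fun w => F w - Expect F.

Definition setk (w : config) (k : E) (b : bool) : config :=
  [ffun j => if j == k then b else w j].
Definition D (k : E) (F : functional) : functional :=
  fun w => Num.sqrt (p * q) * (F (setk w k true) - F (setk w k false)).

Definition is_chaos_coef (F : functional) (c : {set E} -> R) : Prop :=
  forall w, F w = Expect F + \sum_(a : {set E} | a != set0) c a * YA a w.

Definition chaos_coef (F : functional) : {set E} -> R :=
  epsilon (inhabits (fun _ => 0)) (is_chaos_coef F).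

(* Pseudo-inverse of the Ornstein-Uhlenbeck operator. *)
Definition Linv (F : functional) : functional :=
  fun w => - \sum_(a : {set E} | a != set0) (chaos_coef F a / #|a|%:R) * YA a w.

End Defs.

(* With Y_k = (B_k - p) / sqrt(pq) one has B_k = p + sqrt(pq) Y_k, so
   B_A = sum_(a \subset A) sqrt(pq)^|a| p^(|A|-|a|) Y_a; since the Y_a are
   orthonormal for the product measure, these are the chaos coefficients of
   B_A^c.  As D_k Y_a = 1{k in a} Y_(a\k) and L^-1 divides the a-th coefficient
   by -|a|, this gives (i) and writes -D_k L^-1 B_A^c in the basis Y_b,
   b \subset A\k.  Expanding the B's on the right of (ii) in the same basis
   reduces (ii) to sum_(b \subset c \subset D) 1 / ((|D|+1) C(|D|,|c|)) = 1/(|b|+1),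
   which follows from C(r,j) / C(t+r,t+j) = C(t+j,t) / C(t+r,t) and the
   hockey-stick identity. *)

From HB Require Import structures.
From mathcomp Require Import all_boot all_order all_algebra.
From mathcomp Require Import ring.
From Stdlib Require Import ClassicalEpsilon.
Set Implicit Arguments. Unset Strict Implicit. Unset Printing Implicit Defensive.
Import Order.TTheory GRing.Theory Num.Theory.
Local Open Scope ring_scope.

Lemma mul_bin_bin t r j : (j <= r)%N ->
  ('C(t + r, t + j) * 'C(t + j, t) = 'C(t + r, t) * 'C(r, j))%N.
Proof.
move=> le_jr.
have fact_tj := bin_fact (leq_addr j t); have fact_tr := bin_fact (leq_addr r t).
have fact_r := bin_fact le_jr.
have fact_tr' : ('C(t + r, t + j) * ((t + j)`! * (r - j)`!) = (t + r)`!)%N.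
  by rewrite -(subnDl t) bin_fact ?leq_add2l.
rewrite !addKn in fact_tj fact_tr.
apply/eqP; rewrite -(eqn_pmul2r (_ : 0 < t`! * j`! * (r - j)`!)%N) ?muln_gt0 ?fact_gt0 //.
apply/eqP; transitivity (t + r)`!.
  by rewrite -fact_tr' -fact_tj; ring.
by rewrite -fact_tr -fact_r; ring.
Qed.

Lemma sum_bin_diag t r : (\sum_(j < r.+1) 'C(t + j, t) = 'C((t + r).+1, t.+1))%N.
Proof.
elim: r => [|r IHr]; first by rewrite big_ord1 !addn0 !binn.
by rewrite big_ord_recr /= IHr !addnS binS.
Qed.

Lemma sum_bin_inv_bin (R : numFieldType) t r :
  \sum_(j < r.+1) 'C(r, j)%:R / ((t + r).+1%:R * 'C(t + r, t + j)%:R)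
    = (t.+1%:R)^-1 :> R.
Proof.
have bin_neq0 m n : (n <= m)%N -> 'C(m, n)%:R != 0 :> R.
  by move=> le_nm; rewrite pnatr_eq0 -lt0n bin_gt0.
have N_neq0 : (t + r).+1%:R != 0 :> R by rewrite pnatr_eq0.
transitivity (\sum_(j < r.+1) 'C(t + j, t)%:R / ((t + r).+1%:R * 'C(t + r, t)%:R) : R).
  apply: eq_bigr => j _; have le_jr : (j <= r)%N by rewrite -ltnS.
  apply/eqP; rewrite eqr_div ?mulf_neq0 ?bin_neq0 ?leq_add2l ?leq_addr //; apply/eqP.
  rewrite mulrCA [RHS]mulrCA -!natrM; congr (_ * _)%:R.
  by rewrite mulnC -mul_bin_bin // mulnC.
rewrite -big_distrl /= -natr_sum sum_bin_diag.
have eq_bin : ((t + r).+1 * 'C(t + r, t) = t.+1 * 'C((t + r).+1, t.+1))%N.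
  exact: mul_bin_diag.
rewrite -natrM eq_bin natrM invfM mulrCA mulfV ?mulr1 //.
by rewrite bin_neq0 // ltnS leq_addr.
Qed.

Section SubsetSums.
Variables (T : finType) (V : nmodType).

Lemma sum_subset_card (D : {set T}) (g : nat -> V) :
  \sum_(c : {set T} | c \subset D) g #|c| = \sum_(j < #|D|.+1) g j *+ 'C(#|D|, j).
Proof.
have card_lt (c : {set T}) : c \subset D -> (#|c| < #|D|.+1)%N.
  by rewrite ltnS; apply: subset_leq_card.
rewrite (partition_big (fun c : {set T} => inord #|c| : 'I_#|D|.+1) xpredT) //=.
apply: eq_bigr => j _; rewrite -cards_draws -sumr_const.
apply: eq_big => [c|c /andP[/card_lt lt_cD /eqP <-]]; last by rewrite inordK.
rewrite inE; case: (boolP (c \subset D)) => [/card_lt lt_cD|//].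
by rewrite -val_eqE /= inordK.
Qed.

Lemma sum_supsets (b D : {set T}) (F : {set T} -> V) : b \subset D ->
  \sum_(c : {set T} | (b \subset c) && (c \subset D)) F c =
  \sum_(c : {set T} | c \subset D :\: b) F (b :|: c).
Proof.
move=> sub_bD; rewrite (reindex_onto (fun c => b :|: c) (fun c => c :\: b)) /=.
  apply: eq_big => [c|c /andP[_ /eqP <-]] //.
  rewrite subsetUl subUset sub_bD subsetD setDUl setDv set0U /=.
  by rewrite (sameP eqP setDidPl).
by move=> c /andP[sub_bc _]; rewrite -{2}(setID c b) (setIidPr sub_bc).
Qed.

Lemma sum_subsets_containing (k : T) (A : {set T}) (F : {set T} -> V) : k \in A ->
  \sum_(a : {set T} | (k \in a) && (a \subset A)) F a =
  \sum_(b : {set T} | b \subset A :\ k) F (k |: b).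
Proof.
move=> kA; rewrite -sum_supsets ?sub1set //.
by apply: eq_bigl => a; rewrite sub1set.
Qed.

End SubsetSums.

Lemma sum_supsets_inv_bin (R : numFieldType) (T : finType) (b D : {set T}) :
  b \subset D ->
  \sum_(c : {set T} | (b \subset c) && (c \subset D))
     ((#|D|.+1)%:R * 'C(#|D|, #|c|)%:R)^-1 = (#|b|.+1%:R)^-1 :> R.
Proof.
move=> sub_bD; rewrite sum_supsets //.
under eq_bigr => c.
  rewrite subsetD => /andP[_ /disjoint_setI0 dis_cb].
  rewrite cardsU setIC dis_cb cards0 subn0.
  over.
rewrite (@sum_subset_card _ _ (D :\: b) (fun j => ((#|D|.+1)%:R * 'C(#|D|, #|b| + j)%:R)^-1)).
rewrite cardsDS //; set r := (#|D| - #|b|)%N.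
have -> : #|D| = (#|b| + r)%N by rewrite subnKC // subset_leq_card.
rewrite -(@sum_bin_inv_bin R #|b| r).
by apply: eq_bigr => j _; rewrite [RHS]mulrC [RHS]mulr_natr.
Qed.

Lemma prodrD_subsets (R : comPzSemiRingType) (T : finType) (A : {set T}) (x y : T -> R) :
  \prod_(j in A) (x j + y j) =
  \sum_(J : {set T} | J \subset A) \prod_(j in J) x j * \prod_(j in A :\: J) y j.
Proof.
pose x' j := if j \in A then x j else 0; pose y' j := if j \in A then y j else 1.
rewrite big_mkcond (eq_bigr (fun j => x' j + y' j)); last first.
  by move=> j _; rewrite /x' /y'; case: (j \in A); rewrite ?add0r.
rewrite bigA_distr [RHS]big_mkcond; apply: eq_bigr => J _.
case: (boolP (J \subset A)) => [sub_JA|/subsetPn[j Jj notAj]]; last first.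
  by rewrite (bigD1 j) //= Jj /x' (negbTE notAj) mul0r.
rewrite (bigID (mem J)) /=; congr (_ * _).
  by apply: eq_big => // j Jj; rewrite Jj /x' (subsetP sub_JA).
rewrite big_mkcond [RHS]big_mkcond; apply: eq_bigr => j _.
by rewrite in_setD /y'; case: (j \in J).
Qed.

Section Chaos.
Variables (R : rcfType) (E : finType) (p : R).

Local Notation s := (Num.sqrt (p * q p)).
Local Notation functional := (functional R E).

Definition yv (b : bool) : R := s^-1 * (b%:R - p).

Lemma BvE k (w : config E) : Bv R k w = (w k)%:R.
Proof.
rewrite /Bv /Xv; case: (w k) => /=; last by rewrite addNr mul0r.
by rewrite -[1 + 1]/(2%:R) divff // pnatr_eq0.
Qed.

Lemma BA_prod (A : {set E}) w : BA R A w = \prod_(j in A) (w j)%:R.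
Proof. by apply: eq_bigr => j _; rewrite BvE. Qed.

Lemma YA_prod (A : {set E}) w : YA p A w = \prod_(j in A) yv (w j).
Proof. by apply: eq_bigr => j _; rewrite /Yv BvE. Qed.

Lemma YA0 w : YA p (set0 : {set E}) w = 1.
Proof. exact: big_set0. Qed.

Lemma BA_ge0 (A : {set E}) w : 0 <= BA R A w.
Proof. by rewrite BA_prod; apply: prodr_ge0 => j _; apply: ler0n. Qed.

Lemma eq_Expect (F G : functional) : F =1 G -> Expect p F = Expect p G.
Proof. by move=> eqFG; apply: eq_bigr => w _; rewrite eqFG. Qed.

Lemma Expect_lincomb (I : finType) (P : pred I) (c : I -> R) (F : I -> functional) :
  Expect p (fun w => \sum_(i | P i) c i * F i w) = \sum_(i | P i) c i * Expect p (F i).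
Proof.
rewrite /Expect; under eq_bigr do rewrite big_distrr.
rewrite exchange_big; apply: eq_bigr => i _; rewrite big_distrr.
by apply: eq_bigr => w _; rewrite /= mulrCA.
Qed.

Lemma Expect_prod (g : E -> bool -> R) :
  Expect p (fun w => \prod_k g k (w k)) = \prod_k (p * g k true + q p * g k false).
Proof.
rewrite /Expect /weight.
transitivity (\sum_(w : config E) \prod_k ((if w k then p else q p) * g k (w k))).
  by apply: eq_bigr => w _; rewrite big_split.
rewrite -(bigA_distr_bigA (fun k b => (if b then p else q p) * g k b)).
by apply: eq_bigr => k _; rewrite big_bool.
Qed.

Lemma yv_mean : p * yv true + q p * yv false = 0.
Proof. by rewrite /yv /q /=; ring. Qed.

Hypotheses (p_gt0 : 0 < p) (p_lt1 : p < 1).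

Lemma sqrt_pq_neq0 : s != 0.
Proof. by rewrite gt_eqF // sqrtr_gt0 mulr_gt0 // subr_gt0. Qed.

Lemma yv_var : p * yv true ^+ 2 + q p * yv false ^+ 2 = 1.
Proof.
have s2 : s ^+ 2 = p * q p by rewrite sqr_sqrtr // mulr_ge0 ?subr_ge0 ?ltW.
rewrite /yv /q /= in s2 *.
by rewrite !exprMn exprVn s2; field; rewrite subr_eq0 !gt_eqF.
Qed.

Lemma yv_jump : s * (yv true - yv false) = 1.
Proof. by rewrite /yv -mulrBr mulVKf ?sqrt_pq_neq0 //=; ring. Qed.

Lemma Expect_YAYA (a b : {set E}) :
  Expect p (fun w => YA p a w * YA p b w) = (a == b)%:R.
Proof.
pose g k x := (if k \in a then yv x else 1) * (if k \in b then yv x else 1).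
rewrite (@eq_Expect _ (fun w => \prod_k g k (w k))) => [|w]; last first.
  by rewrite /g big_split -!big_mkcond -!YA_prod.
have factorE k : p * g k true + q p * g k false = ((k \in a) == (k \in b))%:R.
  rewrite /g; case: (k \in a); case: (k \in b); rewrite /= ?mulr1 ?mul1r ?yv_mean //.
    by rewrite -!expr2 yv_var.
  by rewrite /q addrC subrK.
rewrite Expect_prod; under eq_bigr do rewrite factorE.
have [<-|neq_ab] := eqVneq a b; first by rewrite big1 // => k _; rewrite eqxx.
have /existsP[k nek] : [exists k, (k \in a) != (k \in b)].
  apply: contraNT neq_ab => /existsPn eq_ab; apply/eqP/setP => k.
  exact/eqP/negbNE/eq_ab.
by rewrite (bigD1 k) //= (negbTE nek) mul0r.
Qed.

Lemma Expect_mulYA (F : functional) (c : {set E} -> R) b :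
  (forall w, F w = \sum_a c a * YA p a w) -> Expect p (fun w => F w * YA p b w) = c b.
Proof.
move=> F_exp.
rewrite (@eq_Expect _ (fun w => \sum_a c a * (YA p a w * YA p b w))) => [|w]; last first.
  by rewrite F_exp big_distrl; apply: eq_bigr => a _; rewrite mulrA.
rewrite Expect_lincomb (bigD1 b) //= Expect_YAYA eqxx mulr1 big1 ?addr0 //.
by move=> a /negbTE neq_ab; rewrite Expect_YAYA neq_ab mulr0.
Qed.

Lemma Expect_expansion (F : functional) (c : {set E} -> R) :
  (forall w, F w = \sum_a c a * YA p a w) -> Expect p F = c set0.
Proof.
move=> /Expect_mulYA <-; apply: eq_Expect => w.
by rewrite YA0 mulr1.
Qed.

Lemma chaos_coefE (F : functional) (c : {set E} -> R) :
  is_chaos_coef p F c -> forall b, b != set0 -> chaos_coef p F b = c b.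
Proof.
have coefE c' b : is_chaos_coef p F c' -> b != set0 ->
    c' b = Expect p (fun w => F w * YA p b w).
  move=> F_c' b_neq0.
  rewrite (@Expect_mulYA _ (fun a => if a == set0 then Expect p F else c' a)).
    by rewrite (negbTE b_neq0).
  move=> w; rewrite F_c' [RHS](bigD1 set0) //= eqxx YA0 mulr1; congr (_ + _).
  by apply: eq_bigr => a /negbTE ->.
move=> F_c b b_neq0; rewrite !(coefE _ b) //.
exact: epsilon_spec (ex_intro _ c F_c).
Qed.

Lemma is_chaos_coef_centered (F : functional) (c : {set E} -> R) :
  (forall w, F w = \sum_a c a * YA p a w) -> is_chaos_coef p (centered p F) c.
Proof.
move=> F_exp.
have centeredE w : centered p F w = \sum_(a : {set E} | a != set0) c a * YA p a w.
  by rewrite /centered (Expect_expansion F_exp) F_exp (bigD1 set0) //= YA0 mulr1 addrC addrK.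
have Expect_centered : Expect p (centered p F) = 0.
  rewrite (@Expect_expansion _ (fun a => if a == set0 then 0 else c a)) ?eqxx // => w.
  rewrite centeredE [RHS](bigD1 set0) //= eqxx mul0r add0r.
  by apply: eq_bigr => a /negbTE ->.
by move=> w; rewrite Expect_centered add0r centeredE.
Qed.

Lemma prod_setk (A : {set E}) k (f : E -> bool -> R) (w : config E) b :
  \prod_(j in A) f j (setk w k b j) =
  if k \in A then f k b * \prod_(j in A :\ k) f j (w j) else \prod_(j in A) f j (w j).
Proof.
have setk_ne j : j != k -> setk w k b j = w j.
  by move=> /negbTE neq_jk; rewrite ffunE neq_jk.
case: ifP => [kA|kNA].
  rewrite (bigD1 k) //= ffunE eqxx; congr (_ * _).
  by apply: eq_big => [j|j /andP[_ /setk_ne ->]] //; rewrite in_setD1 andbC.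
by apply: eq_bigr => j jA; rewrite setk_ne //; apply: contraFneq kNA => <-.
Qed.

Lemma D_prod (F : functional) (A : {set E}) (f : E -> bool -> R) k w :
  (forall w, F w = \prod_(j in A) f j (w j)) ->
  D p k F w = s * (k \in A)%:R * (f k true - f k false) * \prod_(j in A :\ k) f j (w j).
Proof. by move=> F_prod; rewrite /D !F_prod !prod_setk; case: (k \in A) => /=; ring. Qed.

Lemma D_centered (F : functional) k w : D p k (centered p F) w = D p k F w.
Proof. by rewrite /D /centered; ring. Qed.

Lemma D_BA (A : {set E}) k w : D p k (BA R A) w = s * (k \in A)%:R * BA R (A :\ k) w.
Proof.
rewrite (@D_prod _ A (fun _ b => b%:R)) => [|w']; last exact: BA_prod.
by rewrite -BA_prod /= subr0 mulr1.
Qed.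

Lemma D_YA (a : {set E}) k w : D p k (YA p a) w = (k \in a)%:R * YA p (a :\ k) w.
Proof.
rewrite (@D_prod _ a (fun _ => yv)) => [|w']; last exact: YA_prod.
by rewrite -YA_prod (mulrAC s) yv_jump mul1r.
Qed.

Lemma oppD_Linv (F : functional) k w :
  - D p k (Linv p F) w =
  \sum_(a : {set E} | k \in a) chaos_coef p F a / #|a|%:R * YA p (a :\ k) w.
Proof.
rewrite /D /Linv -mulrN opprB opprK addrC -sumrB big_distrr /=.
rewrite big_mkcond [RHS]big_mkcond; apply: eq_bigr => a _ /=.
rewrite -mulrBr mulrCA.
rewrite (_ : s * (YA p a (setk w k true) - YA p a (setk w k false)) = D p k (YA p a) w) //.
rewrite D_YA; case: (eqVneq a set0) => [->|_]; first by rewrite in_set0.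
by case: (k \in a); rewrite /= ?mul1r ?mul0r ?mulr0.
Qed.

Lemma BA_expansion (A : {set E}) w :
  BA R A w = \sum_(a : {set E} | a \subset A) s ^+ #|a| * p ^+ (#|A| - #|a|) * YA p a w.
Proof.
rewrite BA_prod (eq_bigr (fun j => s * yv (w j) + p)) => [|j _]; last first.
  by rewrite /yv mulVKf ?sqrt_pq_neq0 // subrK.
rewrite prodrD_subsets; apply: eq_bigr => a sub_aA.
by rewrite big_split /= !prodr_const cardsDS // -YA_prod mulrAC.
Qed.

Lemma chaos_coef_centered_BA (A a : {set E}) : a != set0 ->
  chaos_coef p (centered p (BA R A)) a =
  if a \subset A then s ^+ #|a| * p ^+ (#|A| - #|a|) else 0.
Proof.
move=> a_neq0; rewrite (@chaos_coefE _
  (fun b => if b \subset A then s ^+ #|b| * p ^+ (#|A| - #|b|) else 0)) //.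
apply: is_chaos_coef_centered => w.
rewrite BA_expansion big_mkcond; apply: eq_bigr => b _.
by case: ifP; rewrite ?mul0r.
Qed.

Lemma oppD_Linv_centered_BA_YA (A : {set E}) k w :
  - D p k (Linv p (centered p (BA R A))) w =
  \sum_(a : {set E} | (k \in a) && (a \subset A))
     s ^+ #|a| * p ^+ (#|A| - #|a|) / #|a|%:R * YA p (a :\ k) w.
Proof.
rewrite oppD_Linv [RHS]big_mkcondr /=; apply: eq_bigr => a ka.
rewrite chaos_coef_centered_BA; last by apply/set0Pn; exists k.
by case: ifP; rewrite ?mul0r.
Qed.

Lemma sum_weighted_BA (D0 : {set E}) w :
  \sum_(b : {set E} | b \subset D0)
     p ^+ (#|D0| - #|b|) / (#|D0|.+1%:R * 'C(#|D0|, #|b|)%:R) * BA R b w =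
  \sum_(c : {set E} | c \subset D0)
     s ^+ #|c| * p ^+ (#|D0| - #|c|) / #|c|.+1%:R * YA p c w.
Proof.
under eq_bigr do rewrite BA_expansion big_distrr /=.
rewrite (exchange_big_dep (fun c : {set E} => c \subset D0)) /=; last first.
  by move=> b c sub_bD sub_cb; apply: subset_trans sub_cb sub_bD.
apply: eq_bigr => c sub_cD.
rewrite -(sum_supsets_inv_bin _ sub_cD) mulr_sumr mulr_suml.
apply: eq_big => [b|b /andP[sub_bD sub_cb]]; first by rewrite andbC.
have := subset_leq_card sub_bD; have := subset_leq_card sub_cb => le_cb le_bD.
have -> : (#|D0| - #|c| = (#|D0| - #|b|) + (#|b| - #|c|))%N.
  by rewrite addnBA // subnK.
by rewrite exprD; ring.
Qed.

Lemma oppD_Linv_centered_BA (A : {set E}) k w :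
  - D p k (Linv p (centered p (BA R A))) w =
  s * (k \in A)%:R *
  \sum_(a : {set E} | (k \in a) && (a \subset A))
     p ^+ (#|A| - #|a|) / (#|A|%:R * 'C(#|A|.-1, #|a|.-1)%:R) * BA R (a :\ k) w.
Proof.
rewrite oppD_Linv_centered_BA_YA.
have [kA|kNA] := boolP (k \in A); last first.
  have no_a (a : {set E}) : (k \in a) && (a \subset A) = false.
    by apply: contraNF kNA => /andP[ka sub_aA]; apply: (subsetP sub_aA).
  by rewrite !big_pred0 // mulr0.
rewrite mulr1 !sum_subsets_containing //.
have cardA : #|A| = #|A :\ k|.+1 by rewrite (cardsD1 k A) kA.
have kNb (b : {set E}) : b \subset A :\ k -> k \notin b.
  by rewrite subsetD1 => /andP[].
transitivity (s * \sum_(b : {set E} | b \subset A :\ k)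
    s ^+ #|b| * p ^+ (#|A :\ k| - #|b|) / #|b|.+1%:R * YA p b w).
  rewrite big_distrr; apply: eq_bigr => b /kNb kNb'.
  by rewrite cardsU1 kNb' setU1K // cardA /= add1n subSS exprS; ring.
rewrite -sum_weighted_BA; congr (_ * _); apply: eq_bigr => b /kNb kNb'.
by rewrite cardsU1 kNb' setU1K // cardA /= add1n subSS.
Qed.

End Chaos.

Theorem lemma5p1 (R : rcfType) (n : nat) (p : R) (hp0 : 0 < p) (hp1 : p < 1)
    (A : {set edge n}) (k : edge n) :
  let sq := Num.sqrt (p * q p) in
  (* (i) *)
  (forall w, D p k (centered p (BA R A)) w = sq * (k \in A)%:R * BA R (A :\ k) w)
  /\
  (* (ii) *)
  (forall w, - D p k (Linv p (centered p (BA R A))) w =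
     sq * (k \in A)%:R *
     \sum_(a : {set edge n} | (k \in a) && (a \subset A))
        p ^+ (#|A| - #|a|) / (#|A|%:R * 'C(#|A|.-1, #|a|.-1)%:R) * BA R (a :\ k) w)
  /\
  (* non-negativity *)
  (forall w, 0 <= D p k (centered p (BA R A)) w)
  /\
  (forall w, 0 <= - D p k (Linv p (centered p (BA R A))) w).
Proof.
move=> sq; have sq_ge0 : 0 <= sq := sqrtr_ge0 _.
have part_i w : D p k (centered p (BA R A)) w = sq * (k \in A)%:R * BA R (A :\ k) w.
  by rewrite D_centered D_BA.
have part_ii := oppD_Linv_centered_BA hp0 hp1 A k.
split; [exact: part_i | split; [exact: part_ii | split => w]].
  by rewrite part_i !mulr_ge0 ?ler0n ?BA_ge0.
rewrite part_ii !mulr_ge0 ?ler0n // sumr_ge0 // => a _.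
by rewrite mulr_ge0 ?BA_ge0 // divr_ge0 ?exprn_ge0 ?mulr_ge0 ?ler0n ?ltW.
Qed.
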